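(* Let $A=(a_{ij})$ be a real $n\times n$ matrix with nonnegative entries, $\mathbf 1=(1,\ldots,1)^{\mathrm T}$, $L=\operatorname{diag}(A\mathbf 1)-A$, and let $P=I-\tau L$ with $0<\tau\le\bigl(\max_i\sum_{j\neq i}a_{ij}\bigr)^{-1}$ (so that $P$ is row stochastic). Let $S$ be the orthogonal projection of $\mathbb R^n$ onto $\mathcal R(L)\oplus\operatorname{span}(\mathbf 1)$, and let $\widetilde P=PS$. Then for every initial vector $x(0)\in\mathbb R^n$, the process $x(k)=\widetilde P^{\,k}x(0)$ coincides with the process $x(k)=P^kSx(0)$, i.e., $\widetilde P^{\,k}x(0)=P^kSx(0)$ for all $k=1,2,\ldots$.
   Context: $\mathcal R(L)$ denotes the range of $L$; $I$ is the $n\times n$ identity matrix. The process $x(k)=P^kSx(0)$ is the orthogonal projection method applied to DeGroot's iterative pooling process $y(k)=P^ky(0)$. *)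

From HB Require Import structures.
From mathcomp Require Import all_boot all_order all_algebra.
From mathcomp Require Import reals.
Set Implicit Arguments. Unset Strict Implicit. Unset Printing Implicit Defensive.
Import Order.TTheory GRing.Theory Num.Theory.
Local Open Scope ring_scope.

Definition ones (R : realType) (n : nat) : 'cV[R]_n := const_mx 1.

Definition laplacian (R : realType) (n : nat) (A : 'M[R]_n) : 'M[R]_n :=
  diag_mx (A *m ones R n)^T - A.

Definition max_offdiag_rowsum (R : realType) (n : nat) (A : 'M[R]_n) : R :=
  \big[Num.max/0]_(i < n) \sum_(j < n | j != i) A i j.

(* The subspace R(L) (+) span(1), encoded (mxalgebra convention) as a row
   space: the rows of L^T span the column space of L, and (ones)^T spans
   span(1). *)
Definition range_plus_ones (R : realType) (n : nat) (L : 'M[R]_n) : 'M[R]_n :=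
  (L^T + (ones R n)^T)%MS.

Definition is_orth_proj (R : realType) (n : nat) (W S : 'M[R]_n) : Prop :=
  forall x : 'cV[R]_n,
    ((S *m x)^T <= W)%MS /\
    (forall w : 'rV[R]_n, (w <= W)%MS -> w *m (x - S *m x) = 0).

From HB Require Import structures.
From mathcomp Require Import all_boot all_order all_algebra.
From mathcomp Require Import reals.
Set Implicit Arguments. Unset Strict Implicit. Unset Printing Implicit Defensive.
Import Order.TTheory GRing.Theory Num.Theory.
Local Open Scope ring_scope.

(* The subspace W = R(L) + span(1) is invariant under P = I - tau L, and S is
   the identity on W.  Hence S P S = P S: applying S after one step of P
   changes nothing once the state already lies in W, and by induction
   (P S)^k = P^k S for k >= 1. *)

Lemma expr_mul_absorbS (R : pzSemiRingType) (p s : R) (k : nat) :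
  s * p * s = p * s -> (p * s) ^+ k.+1 = p ^+ k.+1 * s.
Proof.
move=> sps; elim: k => [|k IHk]; first by rewrite !expr1.
by rewrite exprSr IHk -mulrA [s * _]mulrA sps mulrA -exprSr.
Qed.

Lemma submxB (F : fieldType) (m1 m2 n : nat) (A B : 'M[F]_(m1, n))
    (C : 'M[F]_(m2, n)) :
  (A <= C)%MS -> (B <= C)%MS -> (A - B <= C)%MS.
Proof. by move=> sAC sBC; rewrite addmx_sub // eqmx_opp. Qed.

Lemma trmx_mul_self_eq0 (R : realDomainType) (n : nat) (u : 'cV[R]_n) :
  u^T *m u = 0 -> u = 0.
Proof.
move=> /(congr1 (fun M : 'M_1 => M 0 0)); rewrite !mxE => /eqP.
rewrite psumr_eq0 => [/allP u0|i _]; last by rewrite mxE -expr2 sqr_ge0.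
apply/colP => i; have := u0 i (mem_index_enum i).
by rewrite !mxE -expr2 sqrf_eq0 => /eqP.
Qed.

Lemma orth_proj_id (R : realType) (n : nat) (W S : 'M[R]_n) (v : 'cV[R]_n) :
  is_orth_proj W S -> (v^T <= W)%MS -> S *m v = v.
Proof.
move=> /(_ v) [sSvW orthW] svW.
have sdW : ((v - S *m v)^T <= W)%MS by rewrite linearB submxB.
by apply/esym/eqP; rewrite -subr_eq0; apply/eqP/trmx_mul_self_eq0/orthW.
Qed.

Lemma trmx_mulIsubZ_sub (R : fieldType) (n : nat) (L W : 'M[R]_n)
    (t : R) (v : 'cV[R]_n) :
  (L^T <= W)%MS -> (v^T <= W)%MS -> (((1%:M - t *: L) *m v)^T <= W)%MS.
Proof.
move=> sLW svW; rewrite mulmxBl mul1mx -scalemxAl linearB linearZ /=.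
by rewrite submxB // scalemx_sub // trmx_mul (submx_trans (submxMl _ _)).
Qed.

Lemma mulmx_orth_proj_absorb (R : realType) (n : nat) (L S : 'M[R]_n) (t : R) :
  is_orth_proj (range_plus_ones L) S ->
  let P := 1%:M - t *: L in S *m P *m S = P *m S.
Proof.
move=> hS P; apply/matrixP => i j.
have [sSeW _] := hS (delta_mx j 0).
have sLW : (L^T <= range_plus_ones L)%MS by exact: addsmxSl.
have := orth_proj_id hS (trmx_mulIsubZ_sub t sLW sSeW).
by rewrite !mulmxA -!colE => /colP/(_ i); rewrite ![col _ _ _ _]mxE.
Qed.

Theorem theorem4 (R : realType) (n : nat) (A : 'M[R]_n) (tau : R)
  (S : 'M[R]_n)
  (hA : forall i j, 0 <= A i j)
  (htau0 : 0 < tau)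
  (htau1 : tau * max_offdiag_rowsum A <= 1)
  (hS : is_orth_proj (range_plus_ones (laplacian A)) S) :
  let P : 'M[R]_n := 1%:M - tau *: laplacian A in
  let Pt : 'M[R]_n := P *m S in
  forall (x0 : 'cV[R]_n) (k : nat), (1 <= k)%N ->
    Pt ^+ k *m x0 = P ^+ k *m (S *m x0).
Proof.
move=> P Pt x0 [//|k] _.
have SPS : S * P * S = P * S := mulmx_orth_proj_absorb tau hS.
by rewrite [Pt ^+ _](expr_mul_absorbS k SPS) mulmxA.
Qed.
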